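(* With the notation and hypotheses of the average bit error rate $\overline{P}_{er}(\bar\gamma)$ (any $m_X,m_Y,\Omega_X,\Omega_Y,\alpha>0$, $\delta_1>0$, $\delta_3\in\mathbb{N}$, $\delta_{2,j}>0$), the diversity order is $$\mathcal{G}_d:=-\lim_{\bar\gamma\to\infty}\frac{\ln\overline{P}_{er}(\bar\gamma)}{\ln\bar\gamma}=\frac{\alpha}{2}m_X,$$ in particular it does not depend on $m_Y$, $\Omega_X$, $\Omega_Y$.
   Context: Fix parameters $m_X,m_Y,\Omega_X,\Omega_Y>0$. The Beaulieu–Xie shadowed envelope is a random variable $\bar R>0$ with density $$f_{\bar R}(r)=\frac{2r^{2m_X-1}}{\Gamma(m_X)}\left(\frac{m_Y\Omega_X}{m_Y\Omega_X+m_X\Omega_Y}\right)^{m_Y}\left(\frac{m_X}{\Omega_X}\right)^{m_X}{}_1F_1\!\left(m_Y;m_X;\frac{m_X^2\Omega_Y r^2}{\Omega_X(m_Y\Omega_X+m_X\Omega_Y)}\right)e^{-\frac{m_X}{\Omega_X}r^2},\quad r>0.$$ For $\alpha>0$ put $$\mathrm{C}_\alpha=\left[\frac{\Gamma(m_X)}{\Gamma(m_X+\frac{2}{\alpha})\,{}_2F_1\!\left(m_Y,-\frac{2}{\alpha};m_X;-\frac{m_X\Omega_Y}{m_Y\Omega_X}\right)}\right]^{\alpha/2}.$$ For $\bar\gamma>0$, the instantaneous SNR of the $\alpha$-Beaulieu–Xie shadowed channel with average SNR $\bar\gamma$ is the random variable $\gamma=\bar\gamma\,\big(\mathrm{C}_\alpha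 m_X\bar R^2/\Omega_X\big)^{2/\alpha}$, and the average bit error rate is $\overline{P}_{er}(\bar\gamma)=\delta_1\sum_{j=1}^{\delta_3}\mathbb{E}\big[Q(\sqrt{2\delta_{2,j}\gamma})\big]$ with $Q(x)=\frac{1}{\sqrt{2\pi}}\int_x^\infty e^{-t^2/2}dt$. Here ${}_1F_1(a;b;z)=\sum_{n\ge0}\frac{(a)_n}{(b)_n}\frac{z^n}{n!}$, ${}_2F_1$ is the Gauss hypergeometric function. *)

From Stdlib Require Import Reals Factorial.
From Coquelicot Require Import Coquelicot.
Open Scope R_scope.

Fixpoint poch (a : R) (n : nat) : R :=
  match n with
  | O => 1
  | S k => poch a k * (a + INR k)
  end.

Definition Gamma (x : R) : R :=
  RInt_gen (fun t => Rpower t (x - 1) * exp (- t))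
           (at_right 0) (Rbar_locally p_infty).

Definition hyp1F1 (a b z : R) : R :=
  Series (fun n => poch a n / poch b n * z ^ n / INR (fact n)).

Definition hyp2F1_series (a b c z : R) : R :=
  Series (fun n => poch a n * poch b n / poch c n * z ^ n / INR (fact n)).

(* Gauss hypergeometric function 2F1(a,b;c;z): the series for |z| < 1, and
   for z <= -1 its analytic continuation given by the Pfaff transformation
   2F1(a,b;c;z) = (1-z)^(-b) 2F1(c-a,b;c;z/(z-1)), where z/(z-1) in [1/2,1).
   (Values for z >= 1 are not used.) *)
Definition hyp2F1 (a b c z : R) : R :=
  if Rlt_dec (Rabs z) 1 then hyp2F1_series a b c z
  else if Rle_dec z (-1) then
    Rpower (1 - z) (- b) * hyp2F1_series (c - a) b c (z / (z - 1))
  else 0.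

Definition Qfun (x : R) : R :=
  / sqrt (2 * PI) *
  RInt_gen (fun t => exp (- (t ^ 2) / 2)) (at_point x) (Rbar_locally p_infty).

Definition bx_pdf (mX mY OX OY r : R) : R :=
  2 * Rpower r (2 * mX - 1) / Gamma mX
  * Rpower (mY * OX / (mY * OX + mX * OY)) mY
  * Rpower (mX / OX) mX
  * hyp1F1 mY mX (mX ^ 2 * OY * r ^ 2 / (OX * (mY * OX + mX * OY)))
  * exp (- (mX / OX) * r ^ 2).

Definition C_alpha (mX mY OX OY alpha : R) : R :=
  Rpower (Gamma mX /
          (Gamma (mX + 2 / alpha)
           * hyp2F1 mY (- (2 / alpha)) mX (- (mX * OY / (mY * OX)))))
         (alpha / 2).

Definition snr (mX mY OX OY alpha gbar r : R) : R :=
  gbar * Rpower (C_alpha mX mY OX OY alpha * mX * r ^ 2 / OX) (2 / alpha).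

Definition EQ (mX mY OX OY alpha gbar d : R) : R :=
  RInt_gen (fun r => Qfun (sqrt (2 * d * snr mX mY OX OY alpha gbar r))
                     * bx_pdf mX mY OX OY r)
           (at_right 0) (Rbar_locally p_infty).

Definition Pber (mX mY OX OY alpha d1 : R) (d3 : nat) (d2 : nat -> R)
  (gbar : R) : R :=
  d1 * sum_n_m (fun j => EQ mX mY OX OY alpha gbar (d2 j)) 1 d3.

From Stdlib Require Import Reals Lra Lia ZArith.
From Coquelicot Require Import Coquelicot.
Open Scope R_scope.

(* With k = alpha mX / 2, we show that every term
     EQ(gbar) = E[Q(sqrt(2 d gamma))] = int_0^oo Q(sqrt(2 d gbar c0 r^(4/alpha))) f(r) dr
   satisfies cl gbar^(-k) <= EQ(gbar) <= cu gbar^(-k) for gbar >= 1; this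
   two-sided "power order" passes to positive multiples of finite sums, and
   forces -ln P(gbar) / ln gbar -> k.  The two estimates rest on:
   - the density f(r) lies between K1 r^(2mX-1) exp(-(mX/OX) r^2) and
     K2 r^(2mX-1), because 1 <= 1F1(a;b;z) <= A exp(B z) for every B > 1;
   - upper bound: Q(x) <= C exp(-x^2/2), so the integrand is dominated by
     r^(2mX-1) exp(-beta r^(4/alpha)) with beta proportional to gbar, whose
     integral is O(beta^(-k));
   - lower bound: on [r0/2, r0] with r0 = gbar^(-alpha/4) the SNR is bounded,
     so Q(...) is bounded below and the integral is of order r0^(2mX). *)

Lemma exp_le (x y : R) : x <= y -> exp x <= exp y.
Proof.
  intros H. destruct (Req_dec x y) as [->|Hn]; [lra|].
  left. apply exp_increasing. lra.
Qed.

Lemma Rpower_pos (x y : R) : 0 < Rpower x y.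
Proof. apply exp_pos. Qed.

Lemma Rpower_base1 (y : R) : Rpower 1 y = 1.
Proof. unfold Rpower. rewrite ln_1, Rmult_0_r. apply exp_0. Qed.

Lemma Rpower_cont (s x : R) : 0 < x -> continuous (fun r => Rpower r s) x.
Proof.
  intros Hx. apply continuity_pt_filterlim, derivable_continuous_pt.
  exists (s * Rpower x (s - 1)). now apply derivable_pt_lim_power.
Qed.

Lemma Rpower_pow_mult (r p : R) (n : nat) : 0 < r -> Rpower r p ^ n = Rpower r (p * INR n).
Proof. intros Hr. rewrite <- Rpower_pow by apply Rpower_pos. apply Rpower_mult. Qed.

Lemma Rpower_half_lt1 (y : R) : 0 < y -> Rpower (/ 2) y < 1.
Proof.
  intros Hy. unfold Rpower. rewrite <- exp_0. apply exp_increasing.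
  assert (ln (/ 2) < 0) by (rewrite <- ln_1; apply ln_increasing; lra).
  nra.
Qed.

Lemma nat_above (x : R) : 0 <= x -> exists n : nat, x < INR n.
Proof.
  intros Hx. destruct (archimed x) as [H1 _].
  exists (Z.to_nat (up x)). rewrite INR_IZR_INZ, Z2Nat.id; [lra|].
  apply le_IZR. lra.
Qed.

Lemma nat_above_mult (a c : R) : 0 <= a -> 0 < c -> exists n : nat, a < c * INR n.
Proof.
  intros Ha Hc. destruct (nat_above (a / c)) as [n Hn].
  { apply Rdiv_le_0_compat; lra. }
  exists n. apply (Rmult_lt_compat_l c) in Hn; [|lra].
  replace (c * (a / c)) with a in Hn by (field; lra). exact Hn.
Qed.

(* Taylor lower bound for exp, inverted: exp(-y) <= n! / y^n. *)
Lemma exp_neg_bound (y : R) (n : nat) : 0 < y -> exp (- y) <= INR (fact n) / y ^ n.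
Proof.
  intros Hy.
  assert (Hf : 0 < INR (fact n)) by (apply lt_0_INR, lt_O_fact).
  assert (Hyn : 0 < y ^ n) by (apply pow_lt; lra).
  assert (Htaylor : y ^ n / INR (fact n) <= exp y).
  { eapply Rle_trans; [|apply (exp_ge_taylor y n); lra].
    destruct n as [|n]; [simpl; lra|].
    change (sum_f_R0 (fun k => y ^ k / INR (fact k)) (S n)) with
      (sum_f_R0 (fun k => y ^ k / INR (fact k)) n + y ^ (S n) / INR (fact (S n))).
    assert (0 <= sum_f_R0 (fun k => y ^ k / INR (fact k)) n).
    { apply cond_pos_sum. intros k. apply Rdiv_le_0_compat.
      - apply pow_le; lra.
      - apply lt_0_INR, lt_O_fact. }
    lra. }
  rewrite exp_Ropp.
  replace (INR (fact n) / y ^ n) with (/ (y ^ n / INR (fact n))) by (field; lra).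
  apply Rinv_le_contravar; [apply Rdiv_lt_0_compat|]; auto.
Qed.

Lemma continuous_ext_pos (f g : R -> R) (x : R) :
  (forall r, 0 < r -> f r = g r) -> 0 < x -> continuous g x -> continuous f x.
Proof.
  intros Hfg Hx Hc. apply (continuous_ext_loc _ g); auto.
  exists (mkposreal x Hx). intros y Hy. simpl in Hy.
  unfold ball in Hy; simpl in Hy; unfold AbsRing_ball, abs, minus, plus, opp in Hy; simpl in Hy.
  apply Rabs_def2 in Hy. symmetry. apply Hfg. lra.
Qed.

Lemma ex_RInt_pos (f : R -> R) (a b : R) :
  0 < a <= b -> (forall r, 0 < r -> continuous f r) -> ex_RInt f a b.
Proof.
  intros H Hc. apply (ex_RInt_continuous (V:=R_CompleteNormedModule)). intros z Hz.
  rewrite Rmin_left in Hz by lra. rewrite Rmax_right in Hz by lra.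
  apply Hc. lra.
Qed.

Lemma ex_RInt_Rpower (e u v : R) : 0 < u <= v -> ex_RInt (fun r => Rpower r e) u v.
Proof. intros H. apply ex_RInt_pos; auto. intros; now apply Rpower_cont. Qed.

Lemma RInt_Rpower (e u v : R) : e <> 0 -> 0 < u <= v ->
  RInt (fun r => Rpower r (e - 1)) u v = (Rpower v e - Rpower u e) / e.
Proof.
  intros He Huv. apply is_RInt_unique.
  replace ((Rpower v e - Rpower u e) / e) with (minus (Rpower v e / e) (Rpower u e / e))
    by (unfold minus, plus, opp; simpl; field; auto).
  apply (is_RInt_derive (fun r => Rpower r e / e)).
  - intros x Hx. rewrite Rmin_left, Rmax_right in Hx by lra.
    apply (is_derive_ext (fun r => / e * Rpower r e)); [intros; apply Rmult_comm|].
    apply is_derive_Reals.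
    replace (Rpower x (e - 1)) with (/ e * (e * Rpower x (e - 1))) by (field; auto).
    apply (derivable_pt_lim_scal (fun r => Rpower r e)).
    apply derivable_pt_lim_power. lra.
  - intros x Hx. rewrite Rmin_left, Rmax_right in Hx by lra. apply Rpower_cont. lra.
Qed.

Lemma RInt_scal_R (f : R -> R) (a b k : R) :
  ex_RInt f a b -> RInt (fun x => k * f x) a b = k * RInt f a b.
Proof. exact (RInt_scal f a b k). Qed.

Lemma RInt_le_interval (f : R -> R) (a' a b b' : R) : a' <= a -> a <= b -> b <= b' ->
  ex_RInt f a' b' -> (forall x, a' <= x <= b' -> 0 <= f x) -> RInt f a b <= RInt f a' b'.
Proof.
  intros H1 H2 H3 Hex Hpos.
  assert (E1 : ex_RInt f a' a) by (apply (ex_RInt_Chasles_1 f _ _ b'); [lra|auto]).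
  assert (E2 : ex_RInt f a b') by (apply (ex_RInt_Chasles_2 f a'); [lra|auto]).
  assert (E3 : ex_RInt f a b) by (apply (ex_RInt_Chasles_1 f _ _ b'); [lra|auto]).
  assert (E4 : ex_RInt f b b') by (apply (ex_RInt_Chasles_2 f a); [lra|auto]).
  rewrite <- (RInt_Chasles f a' a b' E1 E2), <- (RInt_Chasles f a b b' E3 E4).
  assert (0 <= RInt f a' a) by (apply RInt_ge_0; auto; intros x Hx; apply Hpos; lra).
  assert (0 <= RInt f b b') by (apply RInt_ge_0; auto; intros x Hx; apply Hpos; lra).
  unfold plus; simpl. lra.
Qed.

(* Let the lower endpoints a
   range over a set A such that the filter Fa contains every A /\ (-oo, a0].
   If the integrals over all [a, b] with a in A are bounded by M, then the
   improper integral over (Fa, +oo) exists, is at most M, and dominates every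
   such integral: it is the supremum of the partial integrals. *)
Lemma improper_integral_bounded (f : R -> R) (A : R -> Prop)
  (Fa : (R -> Prop) -> Prop) (M : R) :
  (forall a0, A a0 -> Fa (fun a => A a /\ a <= a0)) ->
  (exists a0, A a0) ->
  (forall a t, A a -> a <= t -> 0 <= f t) ->
  (forall a b, A a -> a <= b -> ex_RInt f a b) ->
  (forall a b, A a -> a <= b -> RInt f a b <= M) ->
  exists l, is_RInt_gen f Fa (Rbar_locally p_infty) l /\ l <= M /\
     (forall a b, A a -> a <= b -> RInt f a b <= l).
Proof.
  intros HF [a1 Ha1] Hpos Hex HM.
  set (E := fun y => exists a b, A a /\ a <= b /\ y = RInt f a b).
  assert (HE : bound E) by (exists M; intros y [a [b [Ha [Hab ->]]]]; now apply HM).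
  assert (HE2 : exists y, E y) by (exists (RInt f a1 a1), a1, a1; repeat split; auto; lra).
  destruct (completeness E HE HE2) as [l [Hub Hlub]].
  assert (Hbelow : forall a b, A a -> a <= b -> RInt f a b <= l)
    by (intros a b Ha Hab; apply Hub; exists a, b; auto).
  exists l. split; [|split; auto].
  2:{ apply Hlub. intros y [a [b [Ha [Hab ->]]]]. now apply HM. }
  intros P [eps HP].
  assert (Hnear : exists a0 b0, A a0 /\ a0 <= b0 /\ l - eps < RInt f a0 b0).
  { apply Classical_Prop.NNPP. intros Hn.
    assert (l <= l - eps).
    { apply Hlub. intros y [a [b [Ha [Hab ->]]]].
      apply Rnot_lt_le. intros Hlt. apply Hn. exists a, b. auto. }
    destruct eps as [e He]; simpl in *; lra. }
  destruct Hnear as [a0 [b0 [Ha0 [Hab0 Hlt]]]].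
  apply Filter_prod with (fun a => A a /\ a <= a0) (fun b => b0 < b).
  - now apply HF.
  - exists b0. auto.
  - intros a b [Ha Haa] Hb. simpl.
    exists (RInt f a b). split.
    + apply (RInt_correct f a b). apply Hex; auto; lra.
    + apply HP.
      assert (Hle : RInt f a b <= l) by (apply Hbelow; auto; lra).
      assert (Hge : RInt f a0 b0 <= RInt f a b).
      { apply RInt_le_interval; auto; try lra.
        - apply Hex; auto; lra.
        - intros x Hx. apply (Hpos a); auto; lra. }
      unfold ball; simpl; unfold AbsRing_ball, abs, minus, plus, opp; simpl.
      destruct eps as [e He]; simpl in *. apply Rabs_def1; lra.
Qed.

Lemma at_right0_le (a0 : R) : 0 < a0 -> at_right 0 (fun a => 0 < a /\ a <= a0).
Proof.
  intros H. exists (mkposreal a0 H). intros y Hy Hy0. simpl in Hy.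
  unfold ball in Hy; simpl in Hy; unfold AbsRing_ball, abs, minus, plus, opp in Hy; simpl in Hy.
  apply Rabs_def2 in Hy. split; lra.
Qed.

(* Both the Gamma
   integrand (p = 1) and the dominating function of the error-rate integrand
   have this form; we need that its integrals are O(beta^(-s/p)). *)
Definition kern (s p beta r : R) : R := Rpower r (s - 1) * exp (- (beta * Rpower r p)).

Lemma kern_cont (s p beta r : R) : 0 < r -> continuous (kern s p beta) r.
Proof.
  intros Hr. unfold kern. apply continuity_pt_filterlim, continuity_pt_mult.
  - apply continuity_pt_filterlim. now apply Rpower_cont.
  - apply (continuity_pt_comp (fun r => - (beta * Rpower r p)) exp).
    + apply continuity_pt_opp, continuity_pt_mult.
      * apply continuity_pt_const. intros u v; reflexivity.
      * apply continuity_pt_filterlim. now apply Rpower_cont.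
    + apply derivable_continuous_pt, derivable_pt_exp.
Qed.

Lemma kern_nonneg (s p beta r : R) : 0 <= kern s p beta r.
Proof. unfold kern. apply Rmult_le_pos; left; [apply Rpower_pos|apply exp_pos]. Qed.

Lemma ex_RInt_kern (s p beta u v : R) : 0 < u <= v -> ex_RInt (kern s p beta) u v.
Proof. intros H. apply ex_RInt_pos; auto. intros; now apply kern_cont. Qed.

(* Near the origin the exponential factor is at most 1. *)
Lemma RInt_kern_head (s p beta u v : R) : 0 < s -> 0 <= beta -> 0 < u <= v ->
  RInt (kern s p beta) u v <= Rpower v s / s.
Proof.
  intros Hs Hb Huv.
  eapply Rle_trans.
  - apply (RInt_le _ (fun r => Rpower r (s - 1))); try lra.
    + now apply ex_RInt_kern.
    + now apply ex_RInt_Rpower.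
    + intros x Hx. unfold kern. rewrite <- (Rmult_1_r (Rpower x (s - 1))) at 2.
      apply Rmult_le_compat_l; [left; apply Rpower_pos|].
      rewrite <- exp_0. apply exp_le.
      assert (0 <= beta * Rpower x p) by (apply Rmult_le_pos; [lra|left; apply Rpower_pos]).
      lra.
  - rewrite RInt_Rpower by lra.
    generalize (Rpower_pos u s). intros. unfold Rdiv.
    apply Rmult_le_compat_r; [left; apply Rinv_0_lt_compat|]; lra.
Qed.

(* Away from the origin, exp(-y) <= n!/y^n with p n > s makes the kernel
   integrable at infinity. *)
Lemma RInt_kern_tail (s p beta u v : R) (n : nat) : 0 < p -> 0 < beta ->
  s < p * INR n -> 0 < u <= v ->
  RInt (kern s p beta) u v
  <= INR (fact n) / beta ^ n * Rpower u (s - p * INR n) / (p * INR n - s).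
Proof.
  intros Hp Hb Hsn Huv.
  set (e := s - p * INR n).
  set (F := INR (fact n) / beta ^ n).
  assert (HF : 0 < F) by (apply Rdiv_lt_0_compat; [apply lt_0_INR, lt_O_fact|apply pow_lt; auto]).
  eapply Rle_trans.
  - apply (RInt_le _ (fun r => F * Rpower r (e - 1))); try lra.
    + now apply ex_RInt_kern.
    + apply ex_RInt_scal with (f := fun r => Rpower r (e - 1)). now apply ex_RInt_Rpower.
    + intros x Hx. unfold kern.
      assert (Hy : 0 < beta * Rpower x p) by (apply Rmult_lt_0_compat; auto; apply Rpower_pos).
      eapply Rle_trans.
      { apply Rmult_le_compat_l; [left; apply Rpower_pos|]. apply (exp_neg_bound _ n Hy). }
      rewrite Rpow_mult_distr, Rpower_pow_mult by lra.
      replace (e - 1) with ((s - 1) + - (p * INR n)) by (unfold e; ring).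
      rewrite Rpower_plus, Rpower_Ropp. unfold F.
      assert (0 < beta ^ n) by (apply pow_lt; auto).
      assert (0 < Rpower x (p * INR n)) by apply Rpower_pos.
      right. field. lra.
  - rewrite RInt_scal_R by (now apply ex_RInt_Rpower).
    rewrite RInt_Rpower by (unfold e; lra).
    generalize (Rpower_pos v e). intros Hv.
    unfold e in *. replace (F * ((Rpower v (s - p * INR n) - Rpower u (s - p * INR n)) / (s - p * INR n)))
      with (F * (Rpower u (s - p * INR n) - Rpower v (s - p * INR n)) / (p * INR n - s))
      by (field; lra).
    unfold Rdiv. apply Rmult_le_compat_r; [left; apply Rinv_0_lt_compat; lra|].
    apply Rmult_le_compat_l; lra.
Qed.

(* Uniform bound: int_a^b r^(s-1) exp(-beta r^p) dr <= C beta^(-s/p) for all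
   beta > 0 and 0 < a <= b, obtained by splitting at r0 = beta^(-1/p). *)
Lemma kern_bound (s p : R) : 0 < s -> 0 < p -> exists C, 0 < C /\
  forall beta a b, 0 < beta -> 0 < a <= b ->
  RInt (kern s p beta) a b <= C * Rpower beta (- (s / p)).
Proof.
  intros Hs Hp.
  destruct (nat_above_mult s p) as [n Hsn]; [lra|lra|].
  assert (Hf : 0 < INR (fact n)) by (apply lt_0_INR, lt_O_fact).
  exists (1 / s + INR (fact n) / (p * INR n - s)).
  split; [apply Rplus_lt_0_compat; apply Rdiv_lt_0_compat; lra|].
  intros beta a b Hb Hab.
  set (r0 := Rpower beta (- / p)).
  assert (Hr0 : 0 < r0) by apply Rpower_pos.
  set (a' := Rmin a r0). set (b' := Rmax b r0).
  assert (Ha' : 0 < a' <= a /\ a' <= r0)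
    by (unfold a'; repeat split; [apply Rmin_glb_lt; lra|apply Rmin_l|apply Rmin_r]).
  assert (Hb' : b <= b' /\ r0 <= b') by (unfold b'; split; [apply Rmax_l|apply Rmax_r]).
  assert (Henlarge : RInt (kern s p beta) a b <= RInt (kern s p beta) a' b').
  { apply RInt_le_interval; try lra.
    - apply ex_RInt_kern; lra.
    - intros; apply kern_nonneg. }
  rewrite <- (RInt_Chasles (kern s p beta) a' r0 b') in Henlarge
    by (apply ex_RInt_kern; lra).
  assert (Hhead := RInt_kern_head s p beta a' r0 Hs (Rlt_le _ _ Hb) ltac:(lra)).
  assert (Htail := RInt_kern_tail s p beta r0 b' n Hp Hb Hsn ltac:(lra)).
  assert (E1 : Rpower r0 s = Rpower beta (- (s / p))).
  { unfold r0. rewrite Rpower_mult. f_equal. field. lra. }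
  assert (E2 : INR (fact n) / beta ^ n * Rpower r0 (s - p * INR n)
               = INR (fact n) * Rpower beta (- (s / p))).
  { unfold r0. rewrite Rpower_mult.
    replace (- / p * (s - p * INR n)) with (- (s / p) + INR n) by (field; lra).
    rewrite Rpower_plus, Rpower_pow by auto. field. apply pow_nonzero. lra. }
  rewrite E1 in Hhead. rewrite E2 in Htail.
  unfold plus in Henlarge; simpl in Henlarge.
  replace ((1 / s + INR (fact n) / (p * INR n - s)) * Rpower beta (- (s / p)))
    with (Rpower beta (- (s / p)) / s + INR (fact n) * Rpower beta (- (s / p)) / (p * INR n - s))
    by (field; lra).
  lra.
Qed.

(* Gamma(x) > 0: the defining improper integral exists, and dominates the
   integral over [1, 2] of a positive continuous function. *)
Lemma Gamma_pos (x : R) : 0 < x -> 0 < Gamma x.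
Proof.
  intros Hx.
  set (f := fun t => Rpower t (x - 1) * exp (- t)).
  assert (Hfk : forall t, 0 < t -> f t = kern x 1 1 t).
  { intros t Ht. unfold f, kern. rewrite Rpower_1 by auto. f_equal. f_equal. ring. }
  assert (Hc : forall t, 0 < t -> continuous f t).
  { intros t Ht. apply (continuous_ext_pos _ (kern x 1 1)); auto. now apply kern_cont. }
  destruct (kern_bound x 1 Hx Rlt_0_1) as [C [HC Hb]].
  destruct (improper_integral_bounded f (fun a => 0 < a) (at_right 0) C)
    as [l [Hl [_ Hlow]]].
  - apply at_right0_le.
  - exists 1. lra.
  - intros a t Ha Hat. rewrite Hfk by lra. apply kern_nonneg.
  - intros a b Ha Hab. apply ex_RInt_pos; auto.
  - intros a b Ha Hab.
    rewrite (RInt_ext f (kern x 1 1)).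
    + eapply Rle_trans; [apply Hb; auto; lra|]. rewrite Rpower_base1. lra.
    + intros t Ht. rewrite Rmin_left in Ht by lra. apply Hfk. lra.
  - unfold Gamma. fold f. rewrite (is_RInt_gen_unique f l Hl).
    eapply Rlt_le_trans; [|apply (Hlow 1 2); lra].
    apply RInt_gt_0; [lra| |].
    + intros t Ht. unfold f. apply Rmult_lt_0_compat; [apply Rpower_pos|apply exp_pos].
    + intros t Ht. apply Hc. lra.
Qed.

Definition gauss (t : R) : R := exp (- (t ^ 2) / 2).

Lemma gauss_cont (t : R) : continuous gauss t.
Proof.
  apply continuity_pt_filterlim, derivable_continuous_pt.
  eexists. apply is_derive_Reals. unfold gauss. auto_derive; [auto|reflexivity].
Qed.

Lemma ex_RInt_gauss (a b : R) : ex_RInt gauss a b.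
Proof. apply (ex_RInt_continuous (V:=R_CompleteNormedModule)). intros; apply gauss_cont. Qed.

Lemma inv_sqrt_2PI_pos : 0 < / sqrt (2 * PI).
Proof. apply Rinv_0_lt_compat, sqrt_lt_R0. generalize PI_RGT_0. lra. Qed.

(* For t >= x >= 0, t^2/2 >= x^2/2 - 1/2 + (t - x), so the tail integral
   is at most exp(1/2 - x^2/2). *)
Lemma gauss_tail (x : R) : 0 <= x ->
  exists l, is_RInt_gen gauss (at_point x) (Rbar_locally p_infty) l
  /\ l <= exp (/ 2 - x ^ 2 / 2) /\ (forall b, x <= b -> RInt gauss x b <= l).
Proof.
  intros Hx.
  destruct (improper_integral_bounded gauss (fun a => a = x) (at_point x)
              (exp (/ 2 - x ^ 2 / 2))) as [l [Hl [HlM Hlow]]].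
  - intros a0 ->. unfold at_point. split; lra.
  - exists x; auto.
  - intros a t _ _. left. apply exp_pos.
  - intros a b _ _. apply ex_RInt_gauss.
  - intros a b -> Hab. set (c := / 2 - x ^ 2 / 2).
    assert (HD : is_RInt (fun t => exp (c - (t - x))) x b
                   (minus (- exp (c - (b - x))) (- exp (c - (x - x))))).
    { apply (is_RInt_derive (fun t => - exp (c - (t - x)))).
      - intros t _. auto_derive; [auto|].
        replace (c + - (t + - x)) with (c - (t - x)) by ring. ring.
      - intros t _. apply continuity_pt_filterlim, derivable_continuous_pt.
        eexists. apply is_derive_Reals. auto_derive; [auto|reflexivity]. }
    eapply Rle_trans.
    + apply (RInt_le gauss (fun t => exp (c - (t - x))) x b Hab (ex_RInt_gauss x b)
               (ex_intro _ _ HD)).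
      intros t Ht. unfold gauss. apply exp_le. unfold c.
      assert (0 <= (t - x) * x) by (apply Rmult_le_pos; lra).
      assert (0 <= (t - x - 1) * (t - x - 1)) by apply Rle_0_sqr.
      nra.
    + rewrite (is_RInt_unique _ _ _ _ HD). unfold minus, plus, opp; simpl.
      replace (c - (x - x)) with c by ring.
      generalize (exp_pos (c - (b - x))). lra.
  - exists l. auto.
Qed.

Lemma Qfun_eq (x l : R) : is_RInt_gen gauss (at_point x) (Rbar_locally p_infty) l ->
  Qfun x = / sqrt (2 * PI) * l.
Proof. intros Hl. unfold Qfun. f_equal. exact (is_RInt_gen_unique gauss l Hl). Qed.

Lemma Qfun_chasles (x y : R) : 0 <= y ->
  Qfun x = / sqrt (2 * PI) * RInt gauss x y + Qfun y.
Proof.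
  intros Hy.
  destruct (gauss_tail y Hy) as [ly [Hly _]].
  assert (H1 : is_RInt_gen gauss (at_point x) (at_point y) (RInt gauss x y))
    by (apply is_RInt_gen_at_point, (RInt_correct gauss), ex_RInt_gauss).
  rewrite (Qfun_eq x _ (is_RInt_gen_Chasles gauss y _ _ H1 Hly)), (Qfun_eq y _ Hly).
  unfold plus; simpl. ring.
Qed.

Lemma Qfun_bounds (x : R) : 0 <= x ->
  0 < Qfun x /\ Qfun x <= / sqrt (2 * PI) * exp (/ 2 - x ^ 2 / 2).
Proof.
  intros Hx. destruct (gauss_tail x Hx) as [l [Hl [HlM Hlow]]].
  rewrite (Qfun_eq x l Hl). generalize inv_sqrt_2PI_pos. intros Hs.
  split.
  - apply Rmult_lt_0_compat; auto.
    eapply Rlt_le_trans; [|apply (Hlow (x + 1)); lra].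
    apply RInt_gt_0; [lra| |]; intros; [apply exp_pos|apply gauss_cont].
  - apply Rmult_le_compat_l; lra.
Qed.

Lemma Qfun_mono (x y : R) : x <= y -> 0 <= y -> Qfun y <= Qfun x.
Proof.
  intros Hxy Hy. rewrite (Qfun_chasles x y Hy).
  assert (0 <= RInt gauss x y)
    by (apply RInt_ge_0; [lra|apply ex_RInt_gauss|intros; left; apply exp_pos]).
  generalize (Rmult_le_pos _ _ (Rlt_le _ _ inv_sqrt_2PI_pos) H). lra.
Qed.

Lemma Qfun_cont (x : R) : 0 < x -> continuous Qfun x.
Proof.
  intros Hx.
  apply (continuous_ext_pos _ (fun z => Qfun 0 - / sqrt (2 * PI) * RInt gauss 0 z)); auto.
  { intros r Hr. rewrite (Qfun_chasles 0 r) by lra. ring. }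
  apply continuity_pt_filterlim, continuity_pt_minus.
  { apply continuity_pt_const. intros u v; reflexivity. }
  apply continuity_pt_mult.
  { apply continuity_pt_const. intros u v; reflexivity. }
  apply continuity_pt_filterlim.
  apply (ex_derive_continuous (K:=R_AbsRing) (V:=R_NormedModule)).
  exists (gauss x). apply (is_derive_RInt gauss (RInt gauss 0) 0 x).
  - apply filter_forall. intros b. apply (RInt_correct gauss), ex_RInt_gauss.
  - apply gauss_cont.
Qed.

(* Writing
   (a)_n/(b)_n = prod_{k<n} (a+k)/(b+k), each factor is at most 1 + a/b and
   eventually at most any B > 1; hence (a)_n/(b)_n <= A B^n and
   1 <= 1F1(a;b;z) <= A exp(B z) for z >= 0. *)

Lemma eventually_geometric_bound (u : nat -> R) (C B : R) (N : nat) :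
  (forall n, 0 <= u n) -> 1 <= C -> 1 <= B ->
  (forall n, u (S n) <= C * u n) -> (forall n, (N <= n)%nat -> u (S n) <= B * u n) ->
  forall n, u n <= u O * C ^ N * B ^ n.
Proof.
  intros Hu0 HC HB Hstep Htail_step n.
  assert (Hhead : forall n, u n <= u O * C ^ n).
  { induction n0 as [|n0 IH]; simpl; [lra|].
    eapply Rle_trans; [apply Hstep|].
    replace (u O * (C * C ^ n0)) with (C * (u O * C ^ n0)) by ring.
    apply Rmult_le_compat_l; lra. }
  assert (Htail : forall m, u (N + m)%nat <= u N * B ^ m).
  { induction m as [|m IH]; [rewrite Nat.add_0_r; simpl; lra|].
    rewrite Nat.add_succ_r. simpl. eapply Rle_trans; [apply Htail_step; lia|].
    replace (u N * (B * B ^ m)) with (B * (u N * B ^ m)) by ring.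
    apply Rmult_le_compat_l; lra. }
  assert (HCN : 0 <= u O * C ^ N) by (apply Rmult_le_pos; [apply Hu0|apply pow_le; lra]).
  destruct (Nat.le_gt_cases n N) as [Hn|Hn].
  - eapply Rle_trans; [apply Hhead|].
    apply Rle_trans with (u O * C ^ N).
    + apply Rmult_le_compat_l; [apply Hu0|]. apply Rle_pow; auto.
    + rewrite <- (Rmult_1_r (u O * C ^ N)) at 1.
      apply Rmult_le_compat_l; [lra|]. apply pow_R1_Rle. lra.
  - replace n with (N + (n - N))%nat by lia.
    eapply Rle_trans; [apply Htail|].
    apply Rmult_le_compat; [| apply pow_le; lra | |].
    + apply Hu0.
    + apply Hhead.
    + apply Rle_pow; [lra|lia].
Qed.

Lemma poch_pos (a : R) (n : nat) : 0 < a -> 0 < poch a n.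
Proof.
  intros Ha. induction n as [|n IH]; simpl; [lra|].
  apply Rmult_lt_0_compat; auto. generalize (pos_INR n); lra.
Qed.

Lemma poch_ratio_bound (a b B : R) : 0 < a -> 0 < b -> 1 < B ->
  exists A, 0 < A /\ forall n, poch a n / poch b n <= A * B ^ n.
Proof.
  intros Ha Hb HB.
  destruct (nat_above_mult a (B - 1)) as [N HN]; [lra|lra|].
  set (C := 1 + a / b).
  assert (HC : 1 <= C) by (unfold C; generalize (Rdiv_lt_0_compat a b Ha Hb); lra).
  set (u := fun n => poch a n / poch b n).
  assert (Hu : forall n, 0 <= u n)
    by (intros n; left; apply Rdiv_lt_0_compat; apply poch_pos; auto).
  assert (Hrec : forall n, u (S n) = (a + INR n) / (b + INR n) * u n).
  { intros n. unfold u. simpl. generalize (poch_pos b n Hb) (pos_INR n). intros.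
    field. lra. }
  assert (HuC : forall n, u (S n) <= C * u n).
  { intros n. rewrite Hrec. apply Rmult_le_compat_r; auto.
    generalize (pos_INR n). intros Hn.
    assert (E : C - (a + INR n) / (b + INR n) = (b * b + a * INR n) / (b * (b + INR n)))
      by (unfold C; field; lra).
    assert (0 <= (b * b + a * INR n) / (b * (b + INR n)))
      by (apply Rdiv_le_0_compat; nra).
    lra. }
  assert (HuB : forall n, (N <= n)%nat -> u (S n) <= B * u n).
  { intros n Hn. rewrite Hrec. apply Rmult_le_compat_r; auto.
    generalize (pos_INR n) (le_INR _ _ Hn). intros H0 HNn.
    assert (E : B - (a + INR n) / (b + INR n) = (B * b + (B - 1) * INR n - a) / (b + INR n))
      by (field; lra).
    assert (0 <= (B * b + (B - 1) * INR n - a) / (b + INR n))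
      by (apply Rdiv_le_0_compat; nra).
    lra. }
  exists (C ^ N). split; [apply pow_lt; lra|].
  intros n. generalize (eventually_geometric_bound u C B N Hu HC (Rlt_le _ _ HB) HuC HuB n).
  unfold u at 2. simpl. rewrite Rdiv_1_l, Rinv_1, Rmult_1_l. auto.
Qed.

Lemma exp_series (x : R) : is_series (fun n => x ^ n / INR (fact n)) (exp x).
Proof.
  apply (is_series_ext (fun k => scal (pow_n x k) (/ INR (fact k)))).
  - intros n. rewrite pow_n_pow. reflexivity.
  - apply is_exp_Reals.
Qed.

Definition hterm (a b z : R) (n : nat) : R := poch a n / poch b n * z ^ n / INR (fact n).

Lemma hyp1F1_bounds (a b B : R) : 0 < a -> 0 < b -> 1 < B ->
  exists A, 0 < A /\ forall z, 0 <= z -> 1 <= hyp1F1 a b z <= A * exp (B * z).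
Proof.
  intros Ha Hb HB.
  destruct (poch_ratio_bound a b B Ha Hb HB) as [A [HA HAb]].
  exists A. split; auto. intros z Hz.
  assert (Hfac : forall n, 0 < INR (fact n)) by (intros; apply lt_0_INR, lt_O_fact).
  assert (Hnn : forall n, 0 <= hterm a b z n).
  { intros n. unfold hterm. apply Rdiv_le_0_compat; auto. apply Rmult_le_pos.
    - left. apply Rdiv_lt_0_compat; apply poch_pos; auto.
    - apply pow_le; auto. }
  assert (Hdom : forall n, hterm a b z n <= (B * z) ^ n / INR (fact n) * A).
  { intros n. unfold hterm. rewrite Rpow_mult_distr.
    replace (B ^ n * z ^ n / INR (fact n) * A) with ((A * B ^ n) * (z ^ n / INR (fact n)))
      by (unfold Rdiv; ring).
    replace (poch a n / poch b n * z ^ n / INR (fact n))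
      with ((poch a n / poch b n) * (z ^ n / INR (fact n))) by (unfold Rdiv; ring).
    apply Rmult_le_compat_r; [apply Rdiv_le_0_compat; auto; apply pow_le; auto|apply HAb]. }
  assert (HS : is_series (fun n => (B * z) ^ n / INR (fact n) * A) (exp (B * z) * A))
    by (apply is_series_scal_r, exp_series).
  assert (Hex : ex_series (hterm a b z)).
  { apply (ex_series_le (K:=R_AbsRing) (V:=R_CompleteNormedModule) _
             (fun n => (B * z) ^ n / INR (fact n) * A)); [|eexists; exact HS].
    intros n. unfold norm; simpl. unfold abs; simpl. rewrite Rabs_pos_eq; auto. }
  change (hyp1F1 a b z) with (Series (hterm a b z)). split.
  - rewrite Series_incr_1 by auto.
    replace (hterm a b z 0) with 1 by (unfold hterm; simpl; field).
    assert (0 <= Series (fun k => hterm a b z (S k))).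
    { assert (Hzero : Series (fun _ : nat => 0) = 0).
      { transitivity (Series (fun n => 0 * hterm a b z n)).
        - apply Series_ext. intros; ring.
        - rewrite Series_scal_l. ring. }
      rewrite <- Hzero. apply Series_le; [intros n; split; [lra|apply Hnn]|].
      apply (ex_series_incr_1 (hterm a b z)). auto. }
    lra.
  - rewrite Rmult_comm, <- (is_series_unique _ _ HS).
    apply Series_le; [intros n; split; auto|eexists; exact HS].
Qed.

(* Continuity of 1F1(a;b;.): it is a power series with infinite radius of
   convergence, by d'Alembert's ratio test. *)
Definition hcoef (a b : R) (n : nat) : R := poch a n / poch b n / INR (fact n).

Lemma hcoef_pos (a b : R) (n : nat) : 0 < a -> 0 < b -> 0 < hcoef a b n.
Proof.
  intros Ha Hb. unfold hcoef.
  apply Rdiv_lt_0_compat; [apply Rdiv_lt_0_compat; apply poch_pos; auto|].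
  apply lt_0_INR, lt_O_fact.
Qed.

Lemma hcoef_ratio (a b : R) (n : nat) : 0 < a -> 0 < b ->
  0 <= hcoef a b (S n) / hcoef a b n <= (1 + a / b) / (INR n + 1).
Proof.
  intros Ha Hb. generalize (pos_INR n). intros Hn.
  assert (E : hcoef a b (S n) / hcoef a b n = (a + INR n) / ((b + INR n) * (INR n + 1))).
  { unfold hcoef. simpl poch. rewrite fact_simpl, mult_INR, S_INR.
    generalize (poch_pos a n Ha) (poch_pos b n Hb) (lt_0_INR _ (lt_O_fact n)). intros.
    field. repeat split; lra. }
  assert (E' : (1 + a / b) / (INR n + 1) - (a + INR n) / ((b + INR n) * (INR n + 1))
               = (b * b + a * INR n) / (b * (b + INR n) * (INR n + 1)))
    by (field; lra).
  assert (0 <= (b * b + a * INR n) / (b * (b + INR n) * (INR n + 1)))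
    by (apply Rdiv_le_0_compat; [nra|apply Rmult_lt_0_compat; nra]).
  rewrite E. split; [apply Rdiv_le_0_compat; [lra|apply Rmult_lt_0_compat; lra]|lra].
Qed.

Lemma hyp1F1_cont (a b z : R) : 0 < a -> 0 < b -> continuity_pt (hyp1F1 a b) z.
Proof.
  intros Ha Hb.
  assert (HR : CV_radius (hcoef a b) = p_infty).
  { apply CV_radius_infinite_DAlembert.
    - intros n. generalize (hcoef_pos a b n Ha Hb). lra.
    - apply (is_lim_seq_le_le (fun _ => 0) _ (fun n => (1 + a / b) * / (INR n + 1))).
      + intros n. rewrite Rabs_pos_eq; apply (hcoef_ratio a b n Ha Hb).
      + apply is_lim_seq_const.
      + replace (Finite 0) with (Rbar_mult (1 + a / b) 0) by (simpl; f_equal; ring).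
        apply is_lim_seq_scal_l.
        apply (is_lim_seq_ext (fun n => / INR (S n))); [intros; now rewrite S_INR|].
        replace (Finite 0) with (Rbar_inv p_infty) by reflexivity.
        apply is_lim_seq_inv; [|discriminate].
        apply (is_lim_seq_incr_1 INR). apply is_lim_seq_INR. }
  apply (continuity_pt_ext (PSeries (hcoef a b))).
  - intros x. unfold PSeries, hyp1F1. apply Series_ext. intros n. unfold hcoef.
    generalize (poch_pos b n Hb) (lt_0_INR _ (lt_O_fact n)). intros.
    field. lra.
  - apply PSeries_continuity. rewrite HR. simpl. trivial.
Qed.

(* Since 1F1 >= 1 and 1F1(z) <= A exp(B z) with B = (mY OX + mX OY)/(mX OY) > 1
   exactly cancelling the Gaussian factor, the density is squeezed between
   K1 r^(2mX-1) exp(-(mX/OX) r^2) and K2 r^(2mX-1): it behaves like r^(2mX-1)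
   near the origin, which is what fixes the diversity order. *)
Definition Kpdf (mX mY OX OY : R) : R :=
  2 / Gamma mX * Rpower (mY * OX / (mY * OX + mX * OY)) mY * Rpower (mX / OX) mX.

Definition pdf_arg (mX mY OX OY r : R) : R :=
  mX ^ 2 * OY * r ^ 2 / (OX * (mY * OX + mX * OY)).

Lemma pdf_eq (mX mY OX OY r : R) : bx_pdf mX mY OX OY r =
  Kpdf mX mY OX OY * Rpower r (2 * mX - 1)
  * hyp1F1 mY mX (pdf_arg mX mY OX OY r) * exp (- (mX / OX) * r ^ 2).
Proof. unfold bx_pdf, Kpdf, pdf_arg. unfold Rdiv. ring. Qed.

Lemma Kpdf_pos (mX mY OX OY : R) : 0 < mX -> 0 < Kpdf mX mY OX OY.
Proof.
  intros H. unfold Kpdf. repeat apply Rmult_lt_0_compat; try apply Rpower_pos.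
  - lra.
  - apply Rinv_0_lt_compat. now apply Gamma_pos.
Qed.

Lemma pdf_bounds (mX mY OX OY : R) : 0 < mX -> 0 < mY -> 0 < OX -> 0 < OY ->
  exists K1 K2, 0 < K1 /\ 0 < K2 /\ forall r, 0 < r ->
   K1 * Rpower r (2 * mX - 1) * exp (- (mX / OX) * r ^ 2) <= bx_pdf mX mY OX OY r
   /\ bx_pdf mX mY OX OY r <= K2 * Rpower r (2 * mX - 1).
Proof.
  intros HX HY HOX HOY.
  set (B := (mY * OX + mX * OY) / (mX * OY)).
  assert (HB : 1 < B).
  { unfold B. apply (Rmult_lt_reg_r (mX * OY)); [nra|].
    unfold Rdiv. rewrite Rmult_assoc, Rinv_l, Rmult_1_r by nra. nra. }
  destruct (hyp1F1_bounds mY mX B HY HX HB) as [A [HA HAb]].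
  set (K := Kpdf mX mY OX OY).
  assert (HK : 0 < K) by (apply Kpdf_pos; auto).
  exists K, (K * A). split; [auto|split; [nra|]].
  intros r Hr. rewrite pdf_eq. fold K.
  set (z := pdf_arg mX mY OX OY r).
  assert (Hz : 0 <= z).
  { unfold z, pdf_arg. apply Rdiv_le_0_compat; [|apply Rmult_lt_0_compat; nra].
    apply Rmult_le_pos; [apply Rmult_le_pos; [apply pow_le|]|apply pow_le]; lra. }
  destruct (HAb z Hz) as [H1 H2].
  assert (HP : 0 < K * Rpower r (2 * mX - 1)) by (apply Rmult_lt_0_compat; [lra|apply Rpower_pos]).
  assert (HE : 0 < exp (- (mX / OX) * r ^ 2)) by apply exp_pos.
  split.
  - rewrite <- (Rmult_1_r (K * Rpower r (2 * mX - 1))) at 1.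
    apply Rmult_le_compat_r; [lra|]. apply Rmult_le_compat_l; lra.
  - assert (HBz : B * z = mX / OX * r ^ 2)
      by (unfold B, z, pdf_arg; field; repeat split; nra).
    assert (Hprod : hyp1F1 mY mX z * exp (- (mX / OX) * r ^ 2) <= A).
    { eapply Rle_trans; [apply Rmult_le_compat_r; [lra|exact H2]|].
      rewrite Rmult_assoc, <- exp_plus, HBz.
      replace (mX / OX * r ^ 2 + - (mX / OX) * r ^ 2) with 0 by ring.
      rewrite exp_0. lra. }
    replace (K * A * Rpower r (2 * mX - 1)) with ((K * Rpower r (2 * mX - 1)) * A) by ring.
    rewrite Rmult_assoc. apply Rmult_le_compat_l; lra.
Qed.

Lemma pdf_cont (mX mY OX OY r : R) : 0 < mX -> 0 < mY -> 0 < r ->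
  continuity_pt (bx_pdf mX mY OX OY) r.
Proof.
  intros HX HY Hr.
  apply (continuity_pt_ext (fun r => Kpdf mX mY OX OY * Rpower r (2 * mX - 1)
     * hyp1F1 mY mX (pdf_arg mX mY OX OY r) * exp (- (mX / OX) * r ^ 2))).
  { intros x. symmetry. apply pdf_eq. }
  apply continuity_pt_mult; [apply continuity_pt_mult; [apply continuity_pt_mult|]|].
  - apply continuity_pt_const. intros u v; reflexivity.
  - apply continuity_pt_filterlim. now apply Rpower_cont.
  - apply (continuity_pt_comp (pdf_arg mX mY OX OY) (hyp1F1 mY mX)).
    + apply derivable_continuous_pt. eexists. apply is_derive_Reals.
      unfold pdf_arg. auto_derive; [auto|reflexivity].
    + now apply hyp1F1_cont.
  - apply derivable_continuous_pt. eexists. apply is_derive_Reals.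
    auto_derive; [auto|reflexivity].
Qed.

Definition c0 (mX mY OX OY alpha : R) : R :=
  Rpower (C_alpha mX mY OX OY alpha * mX / OX) (2 / alpha).

Lemma snr_eq (mX mY OX OY alpha gbar r : R) : 0 < mX -> 0 < OX -> 0 < r ->
  snr mX mY OX OY alpha gbar r = gbar * c0 mX mY OX OY alpha * Rpower r (4 / alpha).
Proof.
  intros HX HO Hr. unfold snr, c0.
  assert (HC : 0 < C_alpha mX mY OX OY alpha) by apply Rpower_pos.
  replace (C_alpha mX mY OX OY alpha * mX * r ^ 2 / OX)
    with ((C_alpha mX mY OX OY alpha * mX / OX) * Rpower r 2).
  2:{ rewrite <- (Rpower_pow 2 r Hr). replace (INR 2) with 2 by (simpl; ring). field. lra. }
  rewrite <- Rpower_mult_distr; [|apply Rdiv_lt_0_compat; nra|apply Rpower_pos].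
  rewrite Rpower_mult. replace (2 * (2 / alpha)) with (4 / alpha) by (unfold Rdiv; ring).
  ring.
Qed.

Definition integrand (mX mY OX OY alpha gbar d r : R) : R :=
  Qfun (sqrt (2 * d * snr mX mY OX OY alpha gbar r)) * bx_pdf mX mY OX OY r.

Section ErrorRateIntegral.

Variables (mX mY OX OY alpha d : R).
Hypotheses (HX : 0 < mX) (HY : 0 < mY) (HOX : 0 < OX) (HOY : 0 < OY)
  (Halpha : 0 < alpha) (Hd : 0 < d).

Let c := c0 mX mY OX OY alpha.
Let k := alpha / 2 * mX.

Lemma c_pos : 0 < c.
Proof. apply Rpower_pos. Qed.

Lemma snr_pos (gbar r : R) : 0 < gbar -> 0 < r -> 0 < snr mX mY OX OY alpha gbar r.
Proof.
  intros Hg Hr. rewrite snr_eq by auto. fold c.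
  generalize c_pos (Rpower_pos r (4 / alpha)). intros. repeat apply Rmult_lt_0_compat; auto.
Qed.

Lemma integrand_cont (gbar r : R) : 0 < gbar -> 0 < r ->
  continuous (integrand mX mY OX OY alpha gbar d) r.
Proof.
  intros Hg Hr.
  apply continuity_pt_filterlim. unfold integrand.
  apply (continuity_pt_mult (fun r => Qfun (sqrt (2 * d * snr mX mY OX OY alpha gbar r))));
    [|now apply pdf_cont].
  assert (Hsnr : continuity_pt (fun r => 2 * d * snr mX mY OX OY alpha gbar r) r).
  { apply continuity_pt_scal, continuity_pt_scal. unfold snr.
    apply (continuity_pt_comp (fun r => C_alpha mX mY OX OY alpha * mX * r ^ 2 / OX)
             (fun u => Rpower u (2 / alpha))).
    - apply derivable_continuous_pt. eexists. apply is_derive_Reals.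
      auto_derive; [auto|reflexivity].
    - apply continuity_pt_filterlim, Rpower_cont.
      generalize (Rpower_pos (Gamma mX / (Gamma (mX + 2 / alpha)
        * hyp2F1 mY (- (2 / alpha)) mX (- (mX * OY / (mY * OX))))) (alpha / 2)).
      intros HC. apply Rdiv_lt_0_compat; auto.
      apply Rmult_lt_0_compat; [apply Rmult_lt_0_compat; auto|apply pow_lt; auto]. }
  assert (Hpos : 0 < 2 * d * snr mX mY OX OY alpha gbar r)
    by (apply Rmult_lt_0_compat; [lra|now apply snr_pos]).
  apply (continuity_pt_comp (fun r => sqrt (2 * d * snr mX mY OX OY alpha gbar r)) Qfun).
  - apply (continuity_pt_comp _ sqrt); auto. apply continuity_pt_sqrt. lra.
  - apply continuity_pt_filterlim, Qfun_cont, sqrt_lt_R0. auto.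
Qed.

(* Upper bound: Q(x) <= Kq exp(-x^2/2) and pdf <= K2 r^(2mX-1) dominate the
   integrand by a kernel with beta = d gbar c and p = 4/alpha, whose integral
   is O(gbar^(-2mX/(4/alpha))) = O(gbar^(-k)). *)
Lemma integrand_upper (K2 gbar r : R) : 0 < gbar -> 0 < r ->
  0 <= bx_pdf mX mY OX OY r -> bx_pdf mX mY OX OY r <= K2 * Rpower r (2 * mX - 1) ->
  integrand mX mY OX OY alpha gbar d r
  <= (/ sqrt (2 * PI) * exp (/ 2) * K2) * kern (2 * mX) (4 / alpha) (d * gbar * c) r.
Proof.
  intros Hg Hr Hp0 Hp.
  unfold integrand.
  set (x := sqrt (2 * d * snr mX mY OX OY alpha gbar r)).
  assert (Hx2 : x ^ 2 = 2 * d * snr mX mY OX OY alpha gbar r)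
    by (apply pow2_sqrt; generalize (snr_pos gbar r Hg Hr); nra).
  destruct (Qfun_bounds x (sqrt_pos _)) as [Qp Qu].
  assert (HQ : Qfun x <= / sqrt (2 * PI) * exp (/ 2) * exp (- (d * gbar * c * Rpower r (4 / alpha)))).
  { eapply Rle_trans; [exact Qu|]. rewrite Hx2, snr_eq by auto. fold c.
    rewrite (Rmult_assoc (/ sqrt (2 * PI)) (exp (/ 2))), <- exp_plus.
    right. f_equal. f_equal. field. }
  unfold kern. eapply Rle_trans; [apply Rmult_le_compat; [lra|exact Hp0|exact HQ|exact Hp]|].
  right. ring.
Qed.

(* Hence EQ = O(gbar^(-k)); moreover the improper integral defining EQ
   exists and dominates all partial integrals, as needed for the lower bound. *)
Lemma EQ_upper : exists cu, 0 < cu /\ forall gbar, 0 < gbar ->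
  EQ mX mY OX OY alpha gbar d <= cu * Rpower gbar (- k) /\
  (forall a b, 0 < a <= b ->
     RInt (integrand mX mY OX OY alpha gbar d) a b <= EQ mX mY OX OY alpha gbar d).
Proof.
  destruct (pdf_bounds mX mY OX OY HX HY HOX HOY) as [K1 [K2 [HK1 [HK2 Hpdf]]]].
  assert (Hpdf0 : forall r, 0 < r -> 0 <= bx_pdf mX mY OX OY r).
  { intros r Hr. destruct (Hpdf r Hr) as [Hlow _]. eapply Rle_trans; [|exact Hlow].
    repeat apply Rmult_le_pos; try lra; left; [apply Rpower_pos|apply exp_pos]. }
  destruct (kern_bound (2 * mX) (4 / alpha)) as [C [HC Hkb]];
    [lra|apply Rdiv_lt_0_compat; lra|].
  set (Kq := / sqrt (2 * PI) * exp (/ 2)).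
  assert (HKq : 0 < Kq) by (apply Rmult_lt_0_compat; [apply inv_sqrt_2PI_pos|apply exp_pos]).
  generalize c_pos. intros Hc.
  exists (Kq * K2 * C * Rpower (d * c) (- k)).
  split; [apply Rmult_lt_0_compat; [apply Rmult_lt_0_compat; [apply Rmult_lt_0_compat|]|
                                   apply Rpower_pos]; auto|].
  intros gbar Hg.
  set (h := integrand mX mY OX OY alpha gbar d).
  assert (Hb : 0 < d * gbar * c) by (repeat apply Rmult_lt_0_compat; auto).
  destruct (improper_integral_bounded h (fun a => 0 < a) (at_right 0)
              (Kq * K2 * C * Rpower (d * c) (- k) * Rpower gbar (- k)))
    as [l [Hl [HlM Hlow]]].
  - apply at_right0_le.
  - exists 1. lra.
  - intros a t Ha Hat. unfold h, integrand. apply Rmult_le_pos.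
    + left. apply Qfun_bounds, sqrt_pos.
    + apply Hpdf0. lra.
  - intros a b Ha Hab. apply ex_RInt_pos; [lra|]. intros. now apply integrand_cont.
  - intros a b Ha Hab.
    eapply Rle_trans.
    { apply (RInt_le h (fun r => (Kq * K2) * kern (2 * mX) (4 / alpha) (d * gbar * c) r));
        [lra| apply ex_RInt_pos; [lra|intros; now apply integrand_cont]| |].
      - apply ex_RInt_scal with (f := kern _ _ _). apply ex_RInt_kern. lra.
      - intros r Hr. apply integrand_upper; [lra|lra|apply Hpdf0; lra|apply Hpdf; lra]. }
    rewrite RInt_scal_R by (apply ex_RInt_kern; lra).
    eapply Rle_trans; [apply Rmult_le_compat_l; [nra|apply Hkb; auto; lra]|].
    replace (2 * mX / (4 / alpha)) with k by (unfold k; field; lra).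
    replace (d * gbar * c) with ((d * c) * gbar) by ring.
    rewrite <- Rpower_mult_distr by nra.
    right. ring.
  - assert (HEQ : EQ mX mY OX OY alpha gbar d = l) by exact (is_RInt_gen_unique h l Hl).
    rewrite HEQ. split; [auto|]. intros a b Hab. apply Hlow; lra.
Qed.

(* Lower bound: on [r0/2, r0] with r0 = gbar^(-alpha/4) the SNR is at most
   c, so Q(sqrt(2 d gamma)) >= Q(sqrt(2 d c)), while pdf >= K1 e^(-mX/OX)
   r^(2mX-1) there; the integral of r^(2mX-1) over [r0/2, r0] is of order
   r0^(2mX) = gbar^(-k). *)
Lemma integrand_lower (K1 gbar r : R) : 0 < K1 -> 0 < gbar -> 0 < r <= 1 ->
  Rpower r (4 / alpha) <= / gbar ->
  K1 * Rpower r (2 * mX - 1) * exp (- (mX / OX) * r ^ 2) <= bx_pdf mX mY OX OY r ->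
  Qfun (sqrt (2 * d * c)) * K1 * exp (- (mX / OX)) * Rpower r (2 * mX - 1)
  <= integrand mX mY OX OY alpha gbar d r.
Proof.
  intros HK1 Hg Hr Hsmall Hp. unfold integrand.
  assert (HQ : Qfun (sqrt (2 * d * c)) <= Qfun (sqrt (2 * d * snr mX mY OX OY alpha gbar r))).
  { apply Qfun_mono; [|apply sqrt_pos].
    apply sqrt_le_1_alt, Rmult_le_compat_l; [lra|].
    rewrite snr_eq by lra. fold c.
    generalize c_pos. intros Hc.
    apply (Rmult_le_compat_l (gbar * c)) in Hsmall; [|nra].
    replace (gbar * c * / gbar) with c in Hsmall by (field; lra). exact Hsmall. }
  assert (HE : exp (- (mX / OX)) <= exp (- (mX / OX) * r ^ 2)).
  { apply exp_le. assert (0 < mX / OX) by (apply Rdiv_lt_0_compat; lra).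
    assert (r ^ 2 <= 1) by nra. nra. }
  assert (HQ0 : 0 < Qfun (sqrt (2 * d * c))) by apply Qfun_bounds, sqrt_pos.
  generalize (Rpower_pos r (2 * mX - 1)) (exp_pos (- (mX / OX))). intros HP Hexp.
  replace (Qfun (sqrt (2 * d * c)) * K1 * exp (- (mX / OX)) * Rpower r (2 * mX - 1))
    with (Qfun (sqrt (2 * d * c)) * (K1 * Rpower r (2 * mX - 1) * exp (- (mX / OX)))) by ring.
  apply Rmult_le_compat; [lra| repeat apply Rmult_le_pos; lra | exact HQ |].
  eapply Rle_trans; [|exact Hp]. apply Rmult_le_compat_l; [nra|exact HE].
Qed.

Lemma EQ_lower : exists cl, 0 < cl /\ forall gbar, 1 <= gbar ->
  cl * Rpower gbar (- k) <= EQ mX mY OX OY alpha gbar d.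
Proof.
  destruct (pdf_bounds mX mY OX OY HX HY HOX HOY) as [K1 [K2 [HK1 [_ Hpdf]]]].
  destruct EQ_upper as [cu [_ Hdom]].
  set (m := Qfun (sqrt (2 * d * c)) * K1 * exp (- (mX / OX))).
  assert (Hm : 0 < m).
  { apply Rmult_lt_0_compat; [apply Rmult_lt_0_compat; auto|apply exp_pos].
    apply Qfun_bounds, sqrt_pos. }
  generalize (Rpower_half_lt1 (2 * mX) ltac:(lra)). intros Hhalf.
  exists (m * (1 - Rpower (/ 2) (2 * mX)) / (2 * mX)).
  split; [apply Rdiv_lt_0_compat; [apply Rmult_lt_0_compat|]; lra|].
  intros gbar Hg.
  set (r0 := Rpower gbar (- (alpha / 4))).
  assert (Hr0 : 0 < r0) by apply Rpower_pos.
  assert (Hr01 : r0 <= 1)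
    by (unfold r0; rewrite <- (Rpower_O gbar) by lra; apply Rle_Rpower; lra).
  assert (Hr0k : Rpower r0 (2 * mX) = Rpower gbar (- k))
    by (unfold r0, k; rewrite Rpower_mult; f_equal; field).
  assert (Hr0a : Rpower r0 (4 / alpha) = / gbar).
  { unfold r0. rewrite Rpower_mult.
    replace (- (alpha / 4) * (4 / alpha)) with (- (1)) by (field; lra).
    rewrite Rpower_Ropp, Rpower_1 by lra. reflexivity. }
  eapply Rle_trans; [|apply (proj2 (Hdom gbar ltac:(lra)) (r0 / 2) r0); lra].
  eapply Rle_trans;
    [|apply (RInt_le (fun r => m * Rpower r (2 * mX - 1))); [lra| | |]].
  - rewrite RInt_scal_R by (apply ex_RInt_Rpower; lra).
    rewrite RInt_Rpower by lra.
    replace (r0 / 2) with (r0 * / 2) by (unfold Rdiv; ring).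
    rewrite <- Rpower_mult_distr, Hr0k by lra.
    right. field. lra.
  - apply ex_RInt_scal with (f := fun r => Rpower r (2 * mX - 1)). apply ex_RInt_Rpower. lra.
  - apply ex_RInt_pos; [lra|]. intros. apply integrand_cont; auto; lra.
  - intros r Hr. apply integrand_lower; try lra.
    + rewrite <- Hr0a. apply Rle_Rpower_l; [apply Rlt_le, Rdiv_lt_0_compat|]; lra.
    + apply Hpdf. lra.
Qed.

End ErrorRateIntegral.

Definition power_order (f : R -> R) (k : R) : Prop :=
  exists cl cu, 0 < cl /\ 0 < cu /\ forall g, 1 <= g ->
    cl * Rpower g (- k) <= f g <= cu * Rpower g (- k).

Lemma EQ_power_order (mX mY OX OY alpha d : R) :
  0 < mX -> 0 < mY -> 0 < OX -> 0 < OY -> 0 < alpha -> 0 < d ->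
  power_order (fun gbar => EQ mX mY OX OY alpha gbar d) (alpha / 2 * mX).
Proof.
  intros HX HY HOX HOY Ha Hd.
  destruct (EQ_lower mX mY OX OY alpha d HX HY HOX HOY Ha Hd) as [cl [Hcl Hlow]].
  destruct (EQ_upper mX mY OX OY alpha d HX HY HOX HOY Ha Hd) as [cu [Hcu Hup]].
  exists cl, cu. split; [auto|split; [auto|]].
  intros g Hg. split; [apply Hlow; auto|apply Hup; lra].
Qed.

Lemma power_order_ext (f h : R -> R) (k : R) :
  (forall g, f g = h g) -> power_order f k -> power_order h k.
Proof.
  intros Hfh [cl [cu [Hl [Hu Hf]]]]. exists cl, cu. split; [auto|split; [auto|]].
  intros g Hg. rewrite <- Hfh. auto.
Qed.

Lemma power_order_plus (f h : R -> R) (k : R) :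
  power_order f k -> power_order h k -> power_order (fun g => f g + h g) k.
Proof.
  intros [cl1 [cu1 [Hl1 [Hu1 Hf]]]] [cl2 [cu2 [Hl2 [Hu2 Hh]]]].
  exists (cl1 + cl2), (cu1 + cu2). split; [lra|split; [lra|]].
  intros g Hg. destruct (Hf g Hg), (Hh g Hg). split; lra.
Qed.

Lemma power_order_scal (a : R) (f : R -> R) (k : R) :
  0 < a -> power_order f k -> power_order (fun g => a * f g) k.
Proof.
  intros Ha [cl [cu [Hl [Hu Hf]]]].
  exists (a * cl), (a * cu). split; [nra|split; [nra|]].
  intros g Hg. destruct (Hf g Hg). rewrite !Rmult_assoc.
  split; apply Rmult_le_compat_l; lra.
Qed.

Lemma power_order_sum (F : nat -> R -> R) (k : R) (n : nat) : (1 <= n)%nat ->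
  (forall j, (1 <= j <= n)%nat -> power_order (F j) k) ->
  power_order (fun g => sum_n_m (fun j => F j g) 1 n) k.
Proof.
  induction n as [|n IH]; intros Hn HF; [lia|].
  destruct (Nat.eq_dec n 0) as [->|Hn0].
  - apply (power_order_ext (F 1%nat)); [intros; now rewrite sum_n_n|apply HF; lia].
  - apply (power_order_ext (fun g => sum_n_m (fun j => F j g) 1 n + F (S n) g)).
    + intros g. rewrite sum_n_Sm by lia. reflexivity.
    + apply power_order_plus; [apply IH; [lia|intros j Hj; apply HF; lia]|apply HF; lia].
Qed.

Lemma shifted_inv_ln_limit (k a : R) : is_lim (fun g => k - a * / ln g) p_infty k.
Proof.
  replace (Finite k) with (Finite (k - a * 0)) by (f_equal; ring).
  apply is_lim_minus'; [apply is_lim_const|].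
  replace (Finite (a * 0)) with (Rbar_mult a 0) by reflexivity.
  apply is_lim_scal_l.
  replace (Finite 0) with (Rbar_inv p_infty) by reflexivity.
  apply is_lim_inv; [apply is_lim_ln_p|discriminate].
Qed.

(* If f(gbar) is of order gbar^(-k), then -ln f(gbar) / ln gbar -> k:
   the quotient lies between k - ln cu / ln gbar and k - ln cl / ln gbar. *)
Lemma power_order_log_limit (f : R -> R) (k : R) :
  power_order f k -> is_lim (fun g => - (ln (f g) / ln g)) p_infty k.
Proof.
  intros [cl [cu [Hcl [Hcu Hf]]]].
  apply (is_lim_le_le_loc (fun g => k - ln cu * / ln g) (fun g => k - ln cl * / ln g));
    [|apply shifted_inv_ln_limit|apply shifted_inv_ln_limit].
  exists 1. intros g Hg. destruct (Hf g ltac:(lra)) as [Hlow Hup].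
  assert (Hlng : 0 < ln g) by (rewrite <- ln_1; apply ln_increasing; lra).
  assert (HR : 0 < Rpower g (- k)) by apply Rpower_pos.
  assert (Hfpos : 0 < f g) by nra.
  assert (Hln : ln cl - k * ln g <= ln (f g) <= ln cu - k * ln g).
  { split.
    - replace (ln cl - k * ln g) with (ln (cl * Rpower g (- k)))
        by (rewrite ln_mult, ln_Rpower by lra; ring).
      apply ln_le; [apply Rmult_lt_0_compat|]; auto.
    - replace (ln cu - k * ln g) with (ln (cu * Rpower g (- k)))
        by (rewrite ln_mult, ln_Rpower by lra; ring).
      apply ln_le; auto. }
  assert (E : forall x, k - x * / ln g = (k * ln g - x) * / ln g) by (intros; field; lra).
  rewrite !E. replace (- (ln (f g) / ln g)) with (- ln (f g) * / ln g) by (field; lra).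
  assert (0 < / ln g) by (apply Rinv_0_lt_compat; lra).
  split; apply Rmult_le_compat_r; lra.
Qed.

Theorem corollary3 (mX mY OX OY alpha d1 : R) (d3 : nat) (d2 : nat -> R) :
  0 < mX -> 0 < mY -> 0 < OX -> 0 < OY -> 0 < alpha -> 0 < d1 ->
  (1 <= d3)%nat ->
  (forall j : nat, (1 <= j <= d3)%nat -> 0 < d2 j) ->
  is_lim (fun gbar => - (ln (Pber mX mY OX OY alpha d1 d3 d2 gbar) / ln gbar))
         p_infty (alpha / 2 * mX).
Proof.
  intros HX HY HOX HOY Ha Hd1 Hd3 Hd2.
  apply power_order_log_limit.
  apply (power_order_scal d1 (fun gbar => sum_n_m (fun j => EQ mX mY OX OY alpha gbar (d2 j)) 1 d3));
    [exact Hd1|].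
  apply (power_order_sum (fun j gbar => EQ mX mY OX OY alpha gbar (d2 j))); [exact Hd3|].
  intros j Hj. apply EQ_power_order; auto.
Qed.
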